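(* Let $G_l$ be a graph of order $n_l$, maximum degree $\Delta_l$ and minimum degree $\delta_l$, $l\in\{1,2\}$. Then: (i) For $i,j\in\{1,2\}$ with $i\neq j$ and every integer $k\in\{\Delta_j-\Delta_i,\dots,\Delta_i+\Delta_j\}$, $\phi_k^d(G_1\times G_2)\ge n_j\,\phi_{k-\Delta_j}^d(G_i)$. (ii) For all integers $k_1\in\{1-\delta_1,\dots,\Delta_1\}$ and $k_2\in\{1-\delta_2,\dots,\Delta_2\}$, $$\phi_{k_1+k_2-1}^d(G_1\times G_2)\ge \phi_{k_1}^d(G_1)\phi_{k_2}^d(G_2)+\min\{n_1-\phi_{k_1}^d(G_1),\,n_2-\phi_{k_2}^d(G_2)\}.$$
   Context: All graphs are finite and simple. For a graph $G=(V,E)$, a set $S\subseteq V$ and $v\in V$, let $\delta_S(v)=|\{u\in S: uv\in E\}|$, $\delta(v)$ the degree of $v$, and $\overline{S}=V\setminus S$. For an integer $k$, a non-empty set $S\subseteq V$ is a defensive $k$-alliance if $\delta_S(v)\ge \delta_{\overline S}(v)+k$ for every $v\in S$. A set $X\subseteq V$ is a defensive $k$-alliance free set ($k$-daf set) if no defensive $k$-alliance $S$ satisfies $S\subseteq X$. $\phi_k^d(G)$ denotes the maximum cardinality of a $k$-daf set in $G$. The Cartesian product $G_1\times G_2$ of $G_1=(V_1,E_1)$, $G_2=(V_2,E_2)$ has vertex set $V_1\times V_2$, with $(a,b)$ adjacent to $(c,d)$ iff either $a=c$ and $bd\in E_2$, or $b=d$ and $ac\in E_1$. *)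

(* Simple graphs = symmetric irreflexive relations on a finType. *)
From HB Require Import structures.
From mathcomp Require Import all_boot all_order all_algebra.
Set Implicit Arguments. Unset Strict Implicit. Unset Printing Implicit Defensive.
Import Order.TTheory GRing.Theory Num.Theory.

Section GraphDefs.
Variable T : finType.
Variable e : rel T.

Definition deg_in (S : {set T}) (v : T) : nat := #|[set u in S | e v u]|.

Definition deg (v : T) : nat := #|[set u | e v u]|.

Definition maxdeg : nat := \max_(v : T) deg v.

(* minimum degree (the seed #|T| is never attained by a degree in a nonempty
   simple graph, so this is the true minimum; for the empty graph it is 0) *)
Definition mindeg : nat := \big[minn/#|T|]_(v : T) deg v.

Definition def_alliance (k : int) (S : {set T}) : bool :=
  (S != set0) &&
  [forall v in S, ((deg_in S v)%:Z >= (deg_in (~: S) v)%:Z + k)%R].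

Definition daf (k : int) (X : {set T}) : bool :=
  [forall S : {set T}, (S \subset X) ==> ~~ def_alliance k S].

(* phi_k^d(G): maximum cardinality of a k-daf set (set0 is always k-daf) *)
Definition phi_d (k : int) : nat := \max_(X : {set T} | daf k X) #|X|.

End GraphDefs.

Definition cart (T1 T2 : finType) (e1 : rel T1) (e2 : rel T2) : rel (T1 * T2)%type :=
  fun x y => ((x.1 == y.1) && e2 x.2 y.2) || ((x.2 == y.2) && e1 x.1 y.1).

(* The whole argument runs through the "surplus" of a vertex v with respect to
   a set S, namely delta_S(v) - delta_{~S}(v): S is a defensive k-alliance iff
   it is non-empty and every vertex of S has surplus at least k, so X is k-daf
   iff every non-empty S included in X has a vertex of surplus below k.
   In G1 x G2 the surplus of (a,b) splits as the surplus of a in the row of S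
   through b plus the surplus of b in the column of S through a.  Hence
   - (i)  if X is (k - Delta_2)-daf in G1, then X x V2 is k-daf in G1 x G2
          (a column surplus never exceeds Delta_2), and symmetrically;
   - (ii) if X_l is k_l-daf in G_l, then X1 x X2 is (k1 + k2 - 1)-daf, and it
          stays so after adding a "matching" D between the complements of X1
          and X2 of size min(n1 - |X1|, n2 - |X2|): the vertices of D have no
          neighbour in X1 x X2 u D, so their surplus is minus their degree,
          which is below k1 + k2 - 1 because k_l >= 1 - delta_l. *)

From HB Require Import structures.
From mathcomp Require Import all_boot all_order all_algebra.
From mathcomp Require Import zify.
Import Order.TTheory GRing.Theory Num.Theory.
Set Implicit Arguments. Unset Strict Implicit. Unset Printing Implicit Defensive.

Section Surplus.
Variables (T : finType) (e : rel T).

Definition surplus (S : {set T}) (v : T) : int :=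
  ((deg_in e S v)%:Z - (deg_in e (~: S) v)%:Z)%R.

Lemma deg_inC (S : {set T}) (v : T) : deg_in e S v + deg_in e (~: S) v = deg e v.
Proof.
rewrite /deg_in /deg -(cardsID S [set u | e v u]).
by congr (_ + _); apply: eq_card => u; rewrite !inE andbC.
Qed.

Lemma deg_in_setT (v : T) : deg_in e setT v = deg e v.
Proof. by apply: eq_card => u; rewrite !inE. Qed.

Lemma surplus_le_deg (S : {set T}) (v : T) : (surplus S v <= (deg e v)%:Z)%R.
Proof. by have := deg_inC S v; rewrite /surplus; lia. Qed.

Lemma surplus_mono (S1 S2 : {set T}) (v : T) :
  S1 \subset S2 -> (surplus S1 v <= surplus S2 v)%R.
Proof.
move=> sub12; have := deg_inC S1 v; have := deg_inC S2 v.
have : deg_in e S1 v <= deg_in e S2 v.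
  apply: subset_leq_card; apply/subsetP => u.
  by rewrite !inE => /andP[/(subsetP sub12) -> ->].
by rewrite /surplus; lia.
Qed.

Lemma surplus_isolated (S : {set T}) (v : T) :
  (forall u, u \in S -> ~~ e v u) -> surplus S v = (- (deg e v)%:Z)%R.
Proof.
move=> noadj; have := deg_inC S v; rewrite /surplus.
have -> : deg_in e S v = 0.
  apply/eqP; rewrite cards_eq0; apply/eqP/setP => u; rewrite !inE.
  by apply/negbTE; rewrite negb_and; case: (boolP (u \in S)) => // /noadj ->.
lia.
Qed.

Lemma dafP (k : int) (X : {set T}) :
  reflect (forall S : {set T}, S \subset X -> S != set0 ->
             exists2 v, v \in S & (surplus S v < k)%R)
          (daf e k X).
Proof.
apply: (iffP forallP) => [H S subSX neS | H S].
- have := H S; rewrite subSX /= /def_alliance neS /= => /forallPn[v].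
  by rewrite negb_imply => /andP[vS]; rewrite -ltNge /surplus => lt_v; exists v => //; lia.
- apply/implyP => subSX; rewrite /def_alliance negb_and -implybE.
  apply/implyP => /(H S subSX) [v vS lt_v]; apply/forallPn; exists v.
  by rewrite vS /= -ltNge; move: lt_v; rewrite /surplus; lia.
Qed.

Lemma phi_d_witness (k : int) : exists2 X, daf e k X & #|X| = phi_d e k.
Proof.
have daf0 : daf e k set0.
  by apply/dafP => S; rewrite subset0 => /eqP ->; rewrite eqxx.
have nonempty : 0 < #|daf e k| by apply/card_gt0P; exists set0.
have [X dafX maxX] := eq_bigmax_cond (fun X : {set T} => #|X|) nonempty.
by exists X; rewrite // /phi_d maxX.
Qed.

Lemma phi_d_ge (k : int) (X : {set T}) : daf e k X -> #|X| <= phi_d e k.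
Proof. exact: (leq_bigmax_cond (F := fun X : {set T} => #|X|)). Qed.

Lemma daf_setU_isolated (k : int) (X Z : {set T}) :
  daf e k X ->
  (forall z y, z \in Z -> y \in X :|: Z -> ~~ e z y) ->
  (forall z, z \in Z -> (- (deg e z)%:Z < k)%R) ->
  daf e k (X :|: Z).
Proof.
move=> /dafP dafX noadj lowdeg; apply/dafP => S subS neS.
have [[z]|noZ] := set0Pn (S :&: Z).
  rewrite inE => /andP[zS zZ]; exists z => //.
  rewrite surplus_isolated ?lowdeg // => u /(subsetP subS).
  exact: noadj.
apply: dafX neS; apply/subsetP => x xS.
have := subsetP subS x xS; rewrite inE => /orP[// | xZ].
by case: noZ; exists x; rewrite inE xS.
Qed.

Lemma deg_le_maxdeg (v : T) : deg e v <= maxdeg e.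
Proof. exact: (leq_bigmax (F := fun v => deg e v)). Qed.

Lemma mindeg_le_deg (v : T) : mindeg e <= deg e v.
Proof.
rewrite /mindeg; have : v \in index_enum T by rewrite mem_index_enum.
elim: (index_enum T) => [|x s IH] //; rewrite inE big_cons => /orP[/eqP<-|/IH le_v].
  exact: geq_minl.
exact: leq_trans (geq_minr _ _) le_v.
Qed.

End Surplus.

Section CartesianProduct.
Variables (T1 T2 : finType) (e1 : rel T1) (e2 : rel T2).
Hypotheses (irr1 : irreflexive e1) (irr2 : irreflexive e2).

Local Notation e := (cart e1 e2).

Definition rowS (S : {set T1 * T2}) (b : T2) : {set T1} := [set x | (x, b) \in S].
Definition colS (S : {set T1 * T2}) (a : T1) : {set T2} := [set y | (a, y) \in S].

Lemma rowSC (S : {set T1 * T2}) (b : T2) : rowS (~: S) b = ~: rowS S b.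
Proof. by apply/setP => x; rewrite !inE. Qed.

Lemma colSC (S : {set T1 * T2}) (a : T1) : colS (~: S) a = ~: colS S a.
Proof. by apply/setP => y; rewrite !inE. Qed.

Lemma deg_in_cart (S : {set T1 * T2}) (a : T1) (b : T2) :
  deg_in e S (a, b) = deg_in e1 (rowS S b) a + deg_in e2 (colS S a) b.
Proof.
rewrite /deg_in -(cardsID [set u : T1 * T2 | u.2 == b]); congr (_ + _).
- rewrite -(card_imset [set x in rowS S b | e1 a x] (f := fun x => (x, b)));
    last by move=> x y [].
  apply: eq_card => -[x y]; rewrite !inE /cart /=.
  apply/idP/imsetP => [/andP[/andP[xyS +] /eqP yb]|[x' + [-> ->]]].
    by subst y; rewrite irr2 andbF eqxx /= => ax; exists x; rewrite ?inE ?xyS.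
  by rewrite !inE => /andP[-> ->]; rewrite eqxx orbT.
- rewrite -(card_imset [set y in colS S a | e2 b y] (f := fun y => (a, y)));
    last by move=> x y [].
  apply: eq_card => -[x y]; rewrite !inE /cart /=.
  apply/idP/imsetP => [/andP[yb /andP[xyS /orP[/andP[/eqP ax byE]|/andP[by_ _]]]]|].
  + by subst x; exists y; rewrite ?inE ?xyS.
  + by rewrite eq_sym by_ in yb.
  case=> y'; rewrite !inE => /andP[ayS byE] [-> ->].
  rewrite ayS eqxx byE /= andbT.
  by apply/eqP => yb; move: byE; rewrite yb irr2.
Qed.

Lemma surplus_cart (S : {set T1 * T2}) (a : T1) (b : T2) :
  surplus e S (a, b) = (surplus e1 (rowS S b) a + surplus e2 (colS S a) b)%R.
Proof. by rewrite /surplus !deg_in_cart rowSC colSC; lia. Qed.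

Lemma deg_cart (a : T1) (b : T2) : deg e (a, b) = deg e1 a + deg e2 b.
Proof.
have rowT : rowS setT b = setT by apply/setP => x; rewrite !inE.
have colT : colS setT a = setT by apply/setP => y; rewrite !inE.
by rewrite -!deg_in_setT deg_in_cart rowT colT.
Qed.

Lemma daf_setX_setT (k : int) (X : {set T1}) :
  daf e1 (k - (maxdeg e2)%:Z)%R X -> daf e k (setX X [set: T2]).
Proof.
move=> /dafP dafX; apply/dafP => S subS /set0Pn[[a0 b0] ab0S].
have rowX : rowS S b0 \subset X.
  by apply/subsetP => x; rewrite inE => /(subsetP subS); rewrite in_setX => /andP[].
have [|a] := dafX _ rowX; first by apply/set0Pn; exists a0; rewrite inE.
rewrite inE => abS lt_a; exists (a, b0) => //.
have := surplus_le_deg e2 (colS S a) b0; have := deg_le_maxdeg e2 b0.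
by rewrite surplus_cart; lia.
Qed.

Lemma daf_setT_setX (k : int) (X : {set T2}) :
  daf e2 (k - (maxdeg e1)%:Z)%R X -> daf e k (setX [set: T1] X).
Proof.
move=> /dafP dafX; apply/dafP => S subS /set0Pn[[a0 b0] ab0S].
have colX : colS S a0 \subset X.
  by apply/subsetP => y; rewrite inE => /(subsetP subS); rewrite in_setX => /andP[].
have [|b] := dafX _ colX; first by apply/set0Pn; exists b0; rewrite inE.
rewrite inE => abS lt_b; exists (a0, b) => //.
have := surplus_le_deg e1 (rowS S b) a0; have := deg_le_maxdeg e1 a0.
by rewrite surplus_cart; lia.
Qed.

(* Project S to its first coordinates to find a vertex a of small surplus,
   then look for a vertex of small surplus in the column of S through a. *)
Lemma daf_setX (k1 k2 : int) (X1 : {set T1}) (X2 : {set T2}) :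
  daf e1 k1 X1 -> daf e2 k2 X2 -> daf e (k1 + k2 - 1)%R (setX X1 X2).
Proof.
move=> /dafP dafX1 /dafP dafX2; apply/dafP => S subS neS.
have inX a b : (a, b) \in S -> (a \in X1) && (b \in X2).
  by move=> /(subsetP subS); rewrite in_setX.
set P := [set ab.1 | ab in S].
have PX1 : P \subset X1.
  by apply/subsetP => _ /imsetP[[a b] /inX /andP[aX1 _] ->].
have [|a + lt_a] := dafX1 P PX1.
  by case/set0Pn: neS => ab abS; apply/set0Pn; exists ab.1; apply: imset_f.
case/imsetP => -[a' b] abS /= aa'; subst a'.
have colX2 : colS S a \subset X2.
  by apply/subsetP => y; rewrite inE => /inX /andP[].
have [|b'] := dafX2 _ colX2; first by apply/set0Pn; exists b; rewrite inE.
rewrite inE => ab'S lt_b'; exists (a, b') => //.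
have : (surplus e1 (rowS S b') a <= surplus e1 P a)%R.
  by apply: surplus_mono; apply/subsetP => x; rewrite inE => xb'S; apply: imset_f xb'S.
by rewrite surplus_cart; lia.
Qed.

Lemma exists_matching (A : {set T1}) (B : {set T2}) (m : nat) :
  m <= #|A| -> m <= #|B| ->
  exists D : {set T1 * T2}, [/\ #|D| = m, D \subset setX A B,
    {in D &, forall u v, u.1 = v.1 -> u = v} & {in D &, forall u v, u.2 = v.2 -> u = v}].
Proof.
move=> mA mB.
pose f (i : 'I_m) := enum_val (widen_ord mA i).
pose g (i : 'I_m) := enum_val (widen_ord mB i).
have f_inj : injective f by move=> i j /enum_val_inj [] /val_inj.
have g_inj : injective g by move=> i j /enum_val_inj [] /val_inj.
exists [set (f i, g i) | i : 'I_m]; split.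
- by rewrite card_imset ?card_ord // => i j [/f_inj].
- by apply/subsetP => _ /imsetP[i _ ->]; rewrite in_setX !enum_valP.
- by move=> _ _ /imsetP[i _ ->] /imsetP[j _ ->] /= /f_inj ->.
- by move=> _ _ /imsetP[i _ ->] /imsetP[j _ ->] /= /g_inj ->.
Qed.

(* (ii): a matching D between the complements of X1 and X2 can be added to
   X1 x X2, since its vertices have no neighbour in X1 x X2 u D. *)
Lemma daf_setX_matching (k1 k2 : int) (X1 : {set T1}) (X2 : {set T2}) :
  (1 - (mindeg e1)%:Z <= k1)%R -> (1 - (mindeg e2)%:Z <= k2)%R ->
  daf e1 k1 X1 -> daf e2 k2 X2 ->
  exists2 Y, daf e (k1 + k2 - 1)%R Y &
    #|Y| = #|X1| * #|X2| + minn (#|T1| - #|X1|) (#|T2| - #|X2|).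
Proof.
move=> lo1 lo2 dafX1 dafX2.
have cardC1 : #|~: X1| = #|T1| - #|X1| by rewrite -(cardsC X1) addKn.
have cardC2 : #|~: X2| = #|T2| - #|X2| by rewrite -(cardsC X2) addKn.
set m := minn _ _.
have mC1 : m <= #|~: X1| by rewrite cardC1 geq_minl.
have mC2 : m <= #|~: X2| by rewrite cardC2 geq_minr.
have [D [cardD subD inj1 inj2]] := exists_matching mC1 mC2.
have outD a b : (a, b) \in D -> (a \notin X1) && (b \notin X2).
  by move=> /(subsetP subD); rewrite in_setX !inE.
exists (setX X1 X2 :|: D).
  apply: daf_setU_isolated (daf_setX dafX1 dafX2) _ _ => [[a b] [x y] abD|[a b] _].
    have /andP[aX1 bX2] := outD _ _ abD.
    rewrite in_setU in_setX /cart /= => xyY; apply/negP.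
    case/orP => /andP[/eqP eq_ab adj]; case/orP: xyY => [/andP[xX1 yX2]|xyD].
    + by move: aX1; rewrite eq_ab xX1.
    + by move: adj; case: (inj1 _ _ abD xyD eq_ab) => _ ->; rewrite irr2.
    + by move: bX2; rewrite eq_ab yX2.
    + by move: adj; case: (inj2 _ _ abD xyD eq_ab) => ->; rewrite irr1.
  by have := mindeg_le_deg e1 a; have := mindeg_le_deg e2 b; rewrite deg_cart; lia.
rewrite cardsU cardsX cardD.
suff -> : setX X1 X2 :&: D = set0 by rewrite cards0 subn0.
apply/setP => -[a b]; rewrite !inE; apply/negP => /andP[/andP[aX1 bX2] /outD].
by rewrite aX1.
Qed.

End CartesianProduct.

Theorem corollary1 (T1 T2 : finType) (e1 : rel T1) (e2 : rel T2)
  (sym1 : symmetric e1) (irr1 : irreflexive e1)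
  (sym2 : symmetric e2) (irr2 : irreflexive e2) :
  (* (i), case i = 1, j = 2 *)
  (forall k : int,
     ((maxdeg e2)%:Z - (maxdeg e1)%:Z <= k)%R ->
     (k <= (maxdeg e1)%:Z + (maxdeg e2)%:Z)%R ->
     #|T2| * phi_d e1 (k - (maxdeg e2)%:Z)%R <= phi_d (cart e1 e2) k) /\
  (* (i), case i = 2, j = 1 *)
  (forall k : int,
     ((maxdeg e1)%:Z - (maxdeg e2)%:Z <= k)%R ->
     (k <= (maxdeg e2)%:Z + (maxdeg e1)%:Z)%R ->
     #|T1| * phi_d e2 (k - (maxdeg e1)%:Z)%R <= phi_d (cart e1 e2) k) /\
  (* (ii) *)
  (forall k1 k2 : int,
     (1 - (mindeg e1)%:Z <= k1)%R -> (k1 <= (maxdeg e1)%:Z)%R ->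
     (1 - (mindeg e2)%:Z <= k2)%R -> (k2 <= (maxdeg e2)%:Z)%R ->
     phi_d e1 k1 * phi_d e2 k2
       + minn (#|T1| - phi_d e1 k1) (#|T2| - phi_d e2 k2)
     <= phi_d (cart e1 e2) (k1 + k2 - 1)%R).
Proof.
split; [|split].
- move=> k _ _; have [X dafX <-] := phi_d_witness e1 (k - (maxdeg e2)%:Z)%R.
  rewrite mulnC -cardsT -cardsX; apply: phi_d_ge.
  exact: daf_setX_setT.
- move=> k _ _; have [X dafX <-] := phi_d_witness e2 (k - (maxdeg e1)%:Z)%R.
  rewrite -cardsT -cardsX; apply: phi_d_ge.
  exact: daf_setT_setX.
- move=> k1 k2 lo1 _ lo2 _.
  have [X1 dafX1 <-] := phi_d_witness e1 k1.
  have [X2 dafX2 <-] := phi_d_witness e2 k2.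
  have [Y dafY <-] := daf_setX_matching irr1 irr2 lo1 lo2 dafX1 dafX2.
  exact: phi_d_ge.
Qed.
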